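(* There does not exist any generalized right linear one-way jumping finite automaton (GRLOWJFA) that accepts the language $Dc=\{wc: w\in D\}\subseteq\{a,b,c\}^*$, where $D$ is the Dyck language over $\{a,b\}$.
   Context: The Dyck language $D\subseteq\{a,b\}^*$ consists of the words $w$ with $|w|_a=|w|_b$ such that every prefix $u$ of $w$ has $|u|_a\ge|u|_b$ ($a$ opening, $b$ closing bracket; $|w|_a$ counts occurrences of $a$). ''Subword'' means a contiguous factor. A GRLOWJFA is a tuple $\mathcal{A}=(\Sigma,Q,q_0,F,R)$ with $\Sigma$ a finite alphabet, $Q$ a finite state set, $q_0\in Q$, $F\subseteq Q$, and $R\subset Q\times\Sigma^+\times Q$ a finite set of rules such that for each $p\in Q$, $w\in\Sigma^+$ at most one $q$ has $(p,w,q)\in R$ (meaning: go from $p$ to $q$ deleting $w$). $\Sigma_p=\{w:(p,w,q)\in R\text{ for some }q\}$. Configurations lie in $\Sigma^*Q\Sigma^*$. Moves $\curvearrowright$: (1) for $t,u,v\in\Sigma^*$ and $(p,x,q)\in R$: $tpuxv\curvearrowright tuqv$ provided $u$ contains no word of $\Sigma_p$ as a subword and there are no $u_1,x_2\in\Sigma^*$, $u_2,x_1\in\Sigma^+$ with $u=u_1u_2$, $x=x_1x_2$, $u_2x_1=x$; (2) for $x\in\Sigma^+$, $y\in\Sigma^*$ with $y$ containing no word of $\Sigma_p$ as a subword: $xpy\curvearrowright pxy$. The accepted language is $L_{GRL}(\mathcal{A})=\{w\in\Sigma^*: q_0w\curvearrowright^* q_f \text{ for some } q_f\in F\}$. *)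

From HB Require Import structures.
From mathcomp Require Import all_boot.
Set Implicit Arguments. Unset Strict Implicit. Unset Printing Implicit Defensive.

Inductive abc := La | Lb | Lc.
Definition abc_eqb (x y : abc) : bool :=
  match x, y with La, La | Lb, Lb | Lc, Lc => true | _, _ => false end.
Lemma abc_eqP : Equality.axiom abc_eqb.
Proof. by case; case; constructor. Qed.
HB.instance Definition _ := hasDecEq.Build abc abc_eqP.

Definition dyck (w : seq abc) : Prop :=
  all (fun x => (x == La) || (x == Lb)) w /\
  count_mem La w = count_mem Lb w /\
  (forall n, count_mem Lb (take n w) <= count_mem La (take n w)).

Definition Dc (w : seq abc) : Prop := exists v, dyck v /\ w = rcons v Lc.

Section GRLOWJFA.
Variables (Sigma : eqType) (Q : finType).
Variable R : seq (Q * seq Sigma * Q).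

Definition wf_rules : Prop :=
  (forall p w q, (p, w, q) \in R -> w != [::]) /\
  (forall p w q q', (p, w, q) \in R -> (p, w, q') \in R -> q = q').

Definition no_sub (p : Q) (u : seq Sigma) : Prop :=
  forall w q, (p, w, q) \in R -> ~~ infix w u.

Definition no_overlap (u x : seq Sigma) : Prop :=
  ~ (exists u1 u2 x1 x2 : seq Sigma,
        [/\ u = u1 ++ u2, x = x1 ++ x2, u2 != [::], x1 != [::] & u2 ++ x1 = x]).

(* configuration x p y is represented as (x, p, y) *)
Definition config := (seq Sigma * Q * seq Sigma)%type.

Inductive move : config -> config -> Prop :=
| move_del (t u x v : seq Sigma) (p q : Q) :
    (p, x, q) \in R -> no_sub p u -> no_overlap u x ->
    move (t, p, u ++ x ++ v) (t ++ u, q, v)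
| move_jump (x y : seq Sigma) (p : Q) :
    x != [::] -> no_sub p y -> move (x, p, y) ([::], p, x ++ y).

Inductive moves : config -> config -> Prop :=
| moves_refl c : moves c c
| moves_step c1 c2 c3 : move c1 c2 -> moves c2 c3 -> moves c1 c3.

Definition accepts (q0 : Q) (F : {set Q}) (w : seq Sigma) : Prop :=
  exists qf, qf \in F /\ moves ([::], q0, w) ([::], qf, [::]).

End GRLOWJFA.

From HB Require Import structures.
From mathcomp Require Import all_boot.
From mathcomp Require Import zify.
Set Implicit Arguments. Unset Strict Implicit. Unset Printing Implicit Defensive.

(* Suppose an automaton accepts Dc and run it on a^n b^n c.  Call sweep the part of a run between
   two jumps.  On a tape a^s W c, a sweep can delete from the front of the a-block only in short
   bursts: a state met twice with nothing skipped in between closes a loop deleting only a's, which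
   can be cut out, yielding an accepted unbalanced word.  So the sweep skips some a's, hence must
   jump later, and it does so while a fixed fraction of the s a's still heads the tape.  Since c is read last, the
   word read by the sweep is c-free.  If the state q reached at the jump began an earlier sweep,
   the words read since then form a c-free loop at q; appending it after c gives a word that is
   accepted (at the jump q matches nothing on the tape, so it reads the appended loop first) but
   does not end in c.  Hence every sweep ends in a fresh state, which a long enough initial block
   makes impossible after #|Q| sweeps. *)

Lemma cat_neq0l (T : eqType) (s1 s2 : seq T) : s1 != [::] -> s1 ++ s2 != [::].
Proof. by case: s1. Qed.

Lemma cat_neq0r (T : eqType) (s1 s2 : seq T) : s2 != [::] -> s1 ++ s2 != [::].
Proof. by case: s1 => //; case: s2. Qed.

Lemma cat_nseq_prefix (T : eqType) (a : T) n r (u z W : seq T) :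
  u ++ z = nseq r a ++ W -> n <= size u -> n <= r -> u = nseq n a ++ drop n u.
Proof.
move=> E Hu Hr; rewrite -{1}(cat_take_drop n u); congr (_ ++ _).
by have := congr1 (take n) E; rewrite !takel_cat ?size_nseq // take_nseq.
Qed.

Lemma cat3_nseq (T : eqType) (a : T) r (u x v W : seq T) :
  u ++ x ++ v = nseq r a ++ W -> size u + size x <= r ->
  [/\ u = nseq (size u) a, x = nseq (size x) a & v = nseq (r - size u - size x) a ++ W].
Proof.
move=> E Hr.
have Er : nseq r a = nseq (size u) a ++ nseq (size x) a ++ nseq (r - size u - size x) a.
  by rewrite -!nseqD; congr nseq; lia.
move/eqP: E; rewrite Er -!catA eqseq_cat ?size_nseq // => /andP [/eqP <-].
by rewrite eqseq_cat ?size_nseq // => /andP [/eqP <- /eqP <-].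
Qed.

Section Runs.
Variables (Sigma : eqType) (Q : finType) (R : seq (Q * seq Sigma * Q)).

Hypothesis rule_neq0 : forall p x q, (p, x, q) \in R -> x != [::].

Local Notation moves := (moves R).

Inductive reads : Q -> seq Sigma -> Q -> Prop :=
| reads_nil p : reads p [::] p
| reads_rule p x r w q : (p, x, r) \in R -> reads r w q -> reads p (x ++ w) q.

Lemma reads_cat p w q w' r : reads p w q -> reads q w' r -> reads p (w ++ w') r.
Proof.
by elim=> // {}p x q1 {}w {}q Hx _ IH Hw'; rewrite -catA; apply: reads_rule Hx (IH Hw').
Qed.

Lemma reads_cat_rule p w q x r : reads p w q -> (q, x, r) \in R -> reads p (w ++ x) r.
Proof.
by move=> Hw Hx; apply: reads_cat Hw _; rewrite -[x]cats0; apply: reads_rule Hx (reads_nil _).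
Qed.

Lemma reads_neq0_inv p w q : reads p w q -> w != [::] ->
  exists x r w', [/\ w = x ++ w', (p, x, r) \in R & reads r w' q].
Proof. by case=> // {}p x r {}w {}q Hx Hw _; exists x, r, w. Qed.

Lemma moves_trans c1 c2 c3 : moves c1 c2 -> moves c2 c3 -> moves c1 c3.
Proof. by elim=> // {}c1 c c' H _ IH H2; apply: moves_step H (IH H2). Qed.

Lemma move_moves c1 c2 : move R c1 c2 -> moves c1 c2.
Proof. by move=> H; apply: moves_step H (moves_refl _ _). Qed.

Lemma no_overlap_nil (x : seq Sigma) : no_overlap [::] x.
Proof.
case=> u1 [u2 [x1 [x2 [/(congr1 size) /esym/eqP]]]].
by rewrite size_cat addn_eq0 !size_eq0 => /andP [_ /eqP ->].
Qed.

Lemma no_sub_nil p : no_sub R p [::].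
Proof.
move=> x q Hx; apply/negP=> /size_infix; rewrite leqn0 => /nilP Ex.
by move: (rule_neq0 Hx); rewrite Ex.
Qed.

Lemma move_del_front t p x q v : (p, x, q) \in R -> move R (t, p, x ++ v) (t, q, v).
Proof.
by move=> Hx; have := move_del t v Hx (@no_sub_nil p) (@no_overlap_nil x); rewrite cats0.
Qed.

Lemma reads_moves p w q t y : reads p w q -> moves (t, p, w ++ y) (t, q, y).
Proof.
elim=> [p0|{}p x r {}w {}q Hx _ IH]; first exact: moves_refl.
by rewrite -catA; apply: moves_step IH; apply: move_del_front.
Qed.

Lemma moves_reads c1 c2 : moves c1 c2 ->
  exists w, [/\ reads c1.1.2 w c2.1.2, perm_eq (c1.1.1 ++ c1.2) (w ++ c2.1.1 ++ c2.2)
              & w = [::] -> size c2.1.1 <= size c1.1.1].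
Proof.
elim=> [c|{}c1 c c' Hmv _ [w [Hw Hperm Hw0]]]; first by exists [::]; split=> //; apply: reads_nil.
case: Hmv Hw Hperm Hw0 => [t u x v p q Hx _ _|x y p _ _] /= Hw Hperm Hw0.
- exists (x ++ w); split; first exact: reads_rule Hx Hw.
  + apply: (@perm_trans _ (x ++ (t ++ u) ++ v)); first by rewrite catA perm_catCA.
    by rewrite -[(x ++ w) ++ _]catA perm_cat2l.
  + by move/eqP; rewrite -size_eq0 size_cat addn_eq0 size_eq0 (negbTE (rule_neq0 Hx)).
- by exists w; split=> // /Hw0; rewrite leqn0 => /eqP ->.
Qed.

End Runs.

Lemma no_overlap_rcons_c (y x : seq abc) : Lc \notin x -> no_overlap (rcons y Lc) x.
Proof.
move=> Hx [u1 [u2 [x1 [x2 [Ey Ex Hu2 Hx1 Eux]]]]].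
case/lastP: u2 Ey Hu2 Eux => [//|u2 z] + _.
rewrite -rcons_cat => /rcons_inj [_ <-] Eux.
by move: Hx; rewrite -Eux mem_cat mem_rcons mem_head.
Qed.

Lemma last_c_in_suffix (u x v z : seq abc) :
  u ++ x ++ v = rcons z Lc -> Lc \notin x -> x != [::] -> exists v', v = rcons v' Lc.
Proof.
case/lastP: v => [|v' l]; last by rewrite catA -rcons_cat => /rcons_inj [_ ->]; exists v'.
rewrite cats0; case/lastP: x => [//|x' l].
by rewrite -rcons_cat => /rcons_inj [_ ->]; rewrite mem_rcons mem_head.
Qed.

Lemma Dc_rcons w : Dc w -> exists v, w = rcons v Lc /\ Lc \notin v.
Proof. by case=> v [[/allP Hab _] ->]; exists v; split=> //; apply/negP=> /Hab. Qed.

Definition balanced (w : seq abc) := count_mem La w = count_mem Lb w.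

Lemma Dc_balanced w : Dc w -> balanced w.
Proof. by case=> v [[_ [Hcnt _]] ->]; rewrite /balanced -!cats1 !count_cat Hcnt. Qed.

Lemma dyck_anbn n : dyck (nseq n La ++ nseq n Lb).
Proof.
split; first by rewrite all_cat !all_nseq /= orbT.
split; first by rewrite !count_cat !count_nseq /=; lia.
move=> i; rewrite take_cat size_nseq; case: ltnP => Hi.
  by rewrite take_nseq ?count_nseq /=; lia.
rewrite !count_cat !count_nseq /=; case: (leqP (i - n) n) => Hin.
  by rewrite take_nseq // count_nseq /=; lia.
by rewrite take_oversize ?size_nseq ?count_nseq /=; lia.
Qed.

Section NoAutomaton.
Variables (Q : finType) (q0 : Q) (F : {set Q}) (R : seq (Q * seq abc * Q)).
Hypothesis wfR : wf_rules R.
Hypothesis accR : forall w, accepts R q0 F w <-> Dc w.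

Local Notation moves := (moves R).
Local Notation reads := (reads R).
Local Notation cfg := (config abc Q).

Lemma rule_neq0 p x q : (p, x, q) \in R -> x != [::].
Proof. exact: (proj1 wfR). Qed.

Definition accepting (c : cfg) := exists qf, qf \in F /\ moves c ([::], qf, [::]).

Lemma reads_Dc w qf : reads q0 w qf -> qf \in F -> Dc w.
Proof.
move=> Hw HF; apply/accR; exists qf; split=> //.
by have := reads_moves rule_neq0 [::] [::] Hw; rewrite cats0.
Qed.

Lemma reads_c_free P q t y : reads q0 P q -> accepting (t, q, y) -> t ++ y != [::] ->
  Lc \notin P.
Proof.
move=> HP [qf [HF Hm]] Hne; have [P' [/= HP' /perm_size Hsize _]] := moves_reads rule_neq0 Hm.
have [v [Ev Hcv]] := Dc_rcons (reads_Dc (reads_cat HP HP') HF).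
case/lastP: P' Hsize Ev {HP'} => [/= Hsize|P' l _]; first by move: Hne; rewrite -size_eq0 Hsize.
by rewrite -rcons_cat => /rcons_inj [Ev _]; apply: contra Hcv; rewrite -Ev mem_cat => ->.
Qed.

Definition lmax := \max_(e <- R) size e.1.2.

Lemma rule_size p (x : seq abc) q : (p, x, q) \in R -> size x <= lmax.
Proof. by move=> Hx; rewrite /lmax (big_rem _ Hx) leq_maxl. Qed.

(* Quantifying over the suffix [E] records that the run never looks beyond [Y]. *)
Definition sweeping p (Y t : seq abc) q (y w : seq abc) :=
  [/\ reads p w q, perm_eq Y (w ++ t ++ y)
    & forall E, moves ([::], p, Y ++ E) (t, q, y ++ E)].

Lemma sweeping_del p Y t q u x v w q' : sweeping p Y t q (u ++ x ++ v) w ->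
  (q, x, q') \in R -> no_sub R q u -> no_overlap u x -> sweeping p Y (t ++ u) q' v (w ++ x).
Proof.
case=> Hw Hperm Hrun Hx Hu Hux; split; first exact: reads_cat_rule Hw Hx.
- apply: perm_trans Hperm _; rewrite -catA perm_cat2l catA perm_catCA.
  by rewrite -catA perm_cat2l catA.
- move=> E; apply: moves_trans (Hrun E) _; rewrite -!catA.
  exact: move_moves (move_del t (v ++ E) Hx Hu Hux).
Qed.

Record jump_point p (Y t : seq abc) q (y w : seq abc) : Prop := JumpPoint {
  jump_sweeping : sweeping p Y t q y w;
  jump_read_neq0 : w != [::];
  jump_skipped_neq0 : t != [::];
  jump_stuck : no_sub R q y;
  jump_last_c : exists y', y = rcons y' Lc;
  jump_accepting : accepting ([::], q, t ++ y) }.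

Lemma jump_point_no_loop A p Y t q y w M : reads q0 A p -> jump_point p Y t q y w ->
  reads q M q -> M != [::] -> Lc \notin M -> False.
Proof.
move=> HA [[_ _ Hrun] _ Ht Hstuck [y' Ey] [qf [HF Hacc]]] HM HM0 HMc.
have [x [r [M' [EM Hx HM']]]] := reads_neq0_inv HM HM0; subst M.
have Hxc : Lc \notin x by apply: contra HMc; rewrite mem_cat => ->.
have Hty : t ++ y != [::] := cat_neq0l _ Ht.
have HDc : Dc (A ++ Y ++ x ++ M').
  apply/accR; exists qf; split=> //.
  apply: moves_trans (reads_moves rule_neq0 _ _ HA) _.
  apply: moves_trans (Hrun _) _.
  apply: moves_step (move_del t M' Hx Hstuck _) _; first by rewrite Ey; apply: no_overlap_rcons_c.
  have := reads_moves rule_neq0 (t ++ y) [::] HM'; rewrite cats0 => /moves_trans; apply.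
  by have := move_jump Hty (@no_sub_nil _ _ _ rule_neq0 q); rewrite cats0 => /moves_step; apply.
have [v [Ev Hv]] := Dc_rcons HDc.
move: HMc HM0 Ev; case/lastP: (x ++ M') => [//|N l] HNc _.
by rewrite catA -rcons_cat => /rcons_inj [_ El]; move: HNc; rewrite El mem_rcons mem_head.
Qed.

Lemma sweeping_jumps A p Y t q y w : reads q0 A p -> sweeping p Y t q y w ->
  w != [::] -> t != [::] -> (exists y', y = rcons y' Lc) -> accepting (t, q, y) ->
  exists t' q' y' w', jump_point p Y (t ++ t') q' y' w'.
Proof.
move=> HA Hsw Hw Ht Hy [qf [HF Hm]].
move Ec: (t, q, y) Hm => c; move Ef: ([::], qf, [::]) => cf Hm.
elim: Hm Ef t q y w Ec Hsw Hw Ht Hy => [c1|c1 c2 c3 Hmv Hm IH] Ef t q y w Ec Hsw Hw Ht Hy.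
  by move: Ht; rewrite -{}Ef in Ec; case: Ec => ->.
case: Hmv Ec Hm IH => [t1 u x v q1 q' Hx Hns Hno|t1 y1 q1 _ Hns] [Et Eq Ey] Hm IH; subst t1 q1.
- rewrite {}Ey in Hsw Hy; have [y' Ey] := Hy; have [Hwq _ _] := Hsw.
  have Hacc : accepting (t ++ u, q', v) by exists qf; split=> //; rewrite Ef.
  have Hxc : Lc \notin x.
    have HP := reads_cat HA (reads_cat_rule Hwq Hx).
    have Htuv : (t ++ u) ++ v != [::] by do 2!apply: cat_neq0l.
    by apply: contra (reads_c_free HP Hacc Htuv); rewrite !mem_cat => ->; rewrite !orbT.
  have [|t' [q'' [y'' [w' Hjump]]]] := IH Ef (t ++ u) q' v (w ++ x) erefl
    (sweeping_del Hsw Hx Hns Hno) (cat_neq0l _ Hw) (cat_neq0l _ Ht).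
    exact: last_c_in_suffix Ey Hxc (rule_neq0 Hx).
  by exists (u ++ t'), q'', y'', w'; rewrite catA.
- subst y1; exists [::], q, y, w; rewrite cats0; split=> //.
  by exists qf; split=> //; rewrite Ef.
Qed.

Definition gain := lmax.+1 * #|Q|.+1.

Lemma gain_gt0 : 0 < gain.
Proof. by rewrite muln_gt0. Qed.

Lemma gain_skip j i n : 0 < j -> i <= lmax -> n < #|Q| -> j + i + lmax * n <= gain * j.
Proof. by rewrite /gain; nia. Qed.

Lemma uniq_stack_size q (st : seq (Q * nat)) : uniq (q :: map fst st) -> size st < #|Q|.
Proof. by move/card_uniqP; rewrite /= size_map => <-; apply: max_card. Qed.

Definition jump_keeps_block p Y s := exists t q y w m W',
  [/\ jump_point p Y t q y w, t ++ y = nseq m La ++ rcons W' Lc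
    & s <= gain * (m + lmax) + lmax * #|Q|].

Section Block.
Variables (A : seq abc) (p : Q) (s : nat) (W : seq abc).
Hypothesis readA : reads q0 A p.
Hypothesis balA : balanced (A ++ nseq s La ++ rcons W Lc).
Hypothesis s_large : lmax * #|Q| + lmax < s.

Local Notation tape r := (nseq r La ++ rcons W Lc).
Local Notation Y := (tape s).

Definition reach k q r := forall Z, moves ([::], p, nseq (s - r) La ++ Z) (nseq k La, q, Z).

Lemma reach_pump k q r r' : reach k q r' -> accepting (nseq k La, q, tape r) ->
  r < r' -> r < s -> False.
Proof.
move=> Hr' [qf [HF Hm]] Hrr' Hrs.
have: Dc (A ++ nseq (s - r') La ++ tape r).
  apply/accR; exists qf; split=> //.
  exact: moves_trans (reads_moves rule_neq0 [::] _ readA) (moves_trans (Hr' _) Hm).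
move/Dc_balanced; move: balA; rewrite /balanced !count_cat !count_nseq /=; lia.
Qed.

Lemma reach_del k q r j i q' : reach k q r -> j + i <= r -> r <= s ->
  (q, nseq i La, q') \in R -> no_sub R q (nseq j La) -> no_overlap (nseq j La) (nseq i La) ->
  reach (k + j) q' (r - j - i).
Proof.
move=> Hr Hji Hrs Hx Hu Hux Z.
have -> : s - (r - j - i) = s - r + j + i by lia.
rewrite !nseqD -!catA; apply: moves_trans (Hr _) _.
exact: move_moves (move_del _ Z Hx Hu Hux).
Qed.

Lemma reach_sweeping k q r : reach k q r -> r <= s ->
  exists w, sweeping p Y (nseq k La) q (tape r) w /\ (w = [::] -> k = 0).
Proof.
move=> Hr Hrs.
have EY : nseq (s - r) La ++ tape r = Y by rewrite catA -nseqD subnK.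
have Hrun E : moves ([::], p, Y ++ E) (nseq k La, q, tape r ++ E).
  by have := Hr (tape r ++ E); rewrite catA EY.
have [w [/= Hw Hperm Hw0]] := moves_reads rule_neq0 (Hrun [::]).
exists w; split; last by move/Hw0; rewrite size_nseq leqn0 => /eqP.
by split=> //; rewrite !cats0 in Hperm.
Qed.

(* [st] lists the states met since the last skip, with the block length then left: a state
   met twice without skipping is a loop deleting only [La]s, which can be pumped down. *)
Inductive in_block : cfg -> Prop :=
  InBlock k q r (st : seq (Q * nat)) of r <= s & s <= r + gain * k + lmax * size st
    & uniq (q :: map fst st) & {in st, forall e, r <= e.2 /\ reach k e.1 e.2}
    & reach k q r : in_block (nseq k La, q, tape r).

Lemma block_jump k q r (st : seq (Q * nat)) : r <= s ->
  s <= r + gain * k + lmax * size st -> size st < #|Q| -> reach k q r -> 0 < k ->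
  no_sub R q (tape r) -> accepting ([::], q, nseq k La ++ tape r) -> jump_keeps_block p Y s.
Proof.
move=> Hrs Hpot Hst Hr Hk Hstuck Hacc.
have [w [Hsw Hw0]] := reach_sweeping Hr Hrs.
exists (nseq k La), q, (tape r), w, (k + r), W; split.
- split=> //; first by apply/eqP=> /Hw0; lia.
  + by rewrite -size_eq0 size_nseq -lt0n.
  + by exists (nseq r La ++ W); rewrite rcons_cat.
- by rewrite catA -nseqD.
- have Hgr : r <= gain * r by rewrite leq_pmull ?gain_gt0.
  have Hlst : lmax * size st <= lmax * #|Q| by rewrite leq_mul2l ltnW ?orbT.
  rewrite !mulnDr; lia.
Qed.

Lemma block_front k q r (st : seq (Q * nat)) i q' : r <= s ->
  s <= r + gain * k + lmax * size st -> uniq (q :: map fst st) ->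
  {in st, forall e, r <= e.2 /\ reach k e.1 e.2} -> reach k q r -> 0 < i <= lmax -> i <= r ->
  reach k q' (r - i) -> accepting (nseq k La, q', tape (r - i)) ->
  in_block (nseq k La, q', tape (r - i)).
Proof.
move=> Hrs Hpot Huniq Hst Hr /andP [Hi0 Hi] Hir Hr' Hacc.
have Hlt : r - i < r by lia.
case: (boolP (q' \in q :: map fst st)) => [|Hq'].
  rewrite in_cons => /orP [/eqP Eq|/mapP [e He Ee]].
    by rewrite Eq in Hacc; case: (reach_pump Hr Hacc Hlt); lia.
  have [Hre Hrep] := Hst e He; rewrite -Ee in Hrep.
  by case: (reach_pump Hrep Hacc); lia.
apply: (InBlock (st := (q, r) :: st)) => //=.
- by lia.
- by rewrite mulnS; lia.
- by rewrite Hq'; exact: Huniq.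
- move=> e; rewrite in_cons => /orP [/eqP -> /=|He]; first by split=> //; lia.
  by have [Hre Hrep] := Hst e He; split=> //; lia.
Qed.

Lemma block_skip k r (st : seq (Q * nat)) j i q' : r <= s ->
  s <= r + gain * k + lmax * size st -> size st < #|Q| -> 0 < j -> i <= lmax -> j + i <= r ->
  reach (k + j) q' (r - j - i) -> in_block (nseq (k + j) La, q', tape (r - j - i)).
Proof.
move=> Hrs Hpot Hst Hj Hi Hjir Hr'.
apply: (InBlock (st := [::])) => //; first by lia.
by have := gain_skip Hj Hi Hst; rewrite /= muln0 mulnDr; lia.
Qed.

Lemma block_exit k q r (st : seq (Q * nat)) (u x v : seq abc) q' : r <= s ->
  s <= r + gain * k + lmax * size st -> size st < #|Q| -> reach k q r ->
  (q, x, q') \in R -> no_sub R q u -> no_overlap u x -> u ++ x ++ v = tape r ->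
  r < size u + size x -> accepting (nseq k La ++ u, q', v) -> jump_keeps_block p Y s.
Proof.
move=> Hrs Hpot Hst Hr Hx Hu Hux Ey Hexit Hacc.
have Hxl := rule_size Hx.
have Hlst : lmax * size st <= lmax * #|Q| by rewrite leq_mul2l ltnW ?orbT.
have Ht : nseq k La ++ u != [::].
  rewrite -size_eq0 size_cat size_nseq addn_eq0 size_eq0; apply/negP=> /andP [/eqP Ek /eqP Eu].
  by move: Hexit Hpot; rewrite Ek Eu muln0 /=; lia.
set mn := minn (size u) r.
have Eu : u = nseq mn La ++ drop mn u := cat_nseq_prefix Ey (geq_minl _ _) (geq_minr _ _).
have [w [Hsw0 _]] := reach_sweeping Hr Hrs; rewrite -Ey in Hsw0.
have Hsw := sweeping_del Hsw0 Hx Hu Hux.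
have Hxc : Lc \notin x.
  have [Hw _ _] := Hsw0.
  have := reads_c_free (reads_cat readA (reads_cat_rule Hw Hx)) Hacc (cat_neq0l _ Ht).
  by apply: contra; rewrite !mem_cat => ->; rewrite !orbT.
have Hv : exists v', v = rcons v' Lc.
  apply: (last_c_in_suffix (z := nseq r La ++ W)) Hxc (rule_neq0 Hx).
  by rewrite rcons_cat; exact: Ey.
have [t' [q2 [y2 [w2 Hj]]]] := sweeping_jumps readA Hsw (cat_neq0r _ (rule_neq0 Hx)) Ht Hv Hacc.
have [y2' Ey2] := jump_last_c Hj.
exists ((nseq k La ++ u) ++ t'), q2, y2, w2, (k + mn), (drop mn u ++ t' ++ y2'); split=> //.
  by rewrite Ey2 nseqD !rcons_cat -!catA {1}Eu -!catA.
have Hgr : r <= gain * r by rewrite leq_pmull ?gain_gt0.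
have Hgm : gain * (k + r) <= gain * (k + mn + lmax) by rewrite leq_mul2l; apply/orP; right; lia.
by move: Hgm; rewrite !mulnDr; lia.
Qed.

Lemma block_step X X' : in_block X -> move R X X' -> accepting X' ->
  in_block X' \/ jump_keeps_block p Y s.
Proof.
case=> k q r st Hrs Hpot Huniq Hst Hr; have Hsize := uniq_stack_size Huniq.
move Ec: (_, q, _) => c Hmv.
case: Hmv Ec => [t u x v q1 q' Hx Hu Hux|t y q1 Ht Hstuck] [Et Eq Ey] Hacc; subst t q1; last first.
  right; subst y; apply: block_jump Hrs Hpot Hsize Hr _ Hstuck Hacc.
  by move: Ht; rewrite -size_eq0 size_nseq lt0n.
move/esym: Ey => Ey; case: (ltnP r (size u + size x)) => Hin.
  right; exact: block_exit Hrs Hpot Hsize Hr Hx Hu Hux Ey Hin Hacc.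
left; have [Eu Ex Ev] := cat3_nseq Ey Hin; rewrite Ev in Hacc *.
have Hi : 0 < size x <= lmax by rewrite (rule_size Hx) lt0n size_eq0 (rule_neq0 Hx).
rewrite Eu Ex in Hx Hu Hux; have Hr' := reach_del Hr Hin Hrs Hx Hu Hux.
case: (posnP (size u)) => Hj.
  move: Hacc Hr'; rewrite Eu Hj cats0 addn0 subn0 => Hacc Hr'.
  by apply: block_front Hrs Hpot Huniq Hst Hr Hi _ Hr' Hacc; lia.
by rewrite {1}Eu -nseqD; apply: block_skip Hrs Hpot Hsize Hj _ Hin Hr'; case/andP: Hi.
Qed.

Lemma block_jumps X : in_block X -> accepting X -> jump_keeps_block p Y s.
Proof.
move=> Hb [qf [HF Hm]]; move Ef: ([::], qf, [::]) Hm => cf Hm.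
elim: Hm Ef Hb => [c|c c' c'' Hmv Hm IH] Ef Hb.
  by case: Hb Ef => k q r st _ _ _ _ _ [_ _ /(congr1 size)]; rewrite size_cat size_rcons addnS.
have Hacc : accepting c' by exists qf; split=> //; rewrite Ef.
by case: (block_step Hb Hmv Hacc) => [/(IH Ef)|].
Qed.

Lemma sweep_jumps : accepting ([::], p, Y) -> jump_keeps_block p Y s.
Proof.
apply: block_jumps; apply: (@InBlock 0 p s [::]) => //; first by rewrite /= !muln0 !addn0.
by move=> Z; rewrite subnn; apply: moves_refl.
Qed.

End Block.

Definition sweep_start (U : {set Q}) p A s W :=
  [/\ reads q0 A p, balanced (A ++ nseq s La ++ rcons W Lc),
      accepting ([::], p, nseq s La ++ rcons W Lc)
    & {in U, forall r, exists2 M, reads r M p & Lc \notin M}].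

Lemma sweep_start_next U p A s W : lmax * #|Q| + lmax < s -> sweep_start U p A s W ->
  exists q A' m W', [/\ q \notin U, sweep_start (q |: U) q A' m W'
                      & s <= gain * (m + lmax) + lmax * #|Q|].
Proof.
move=> Hs [HA Hbal Hacc HU].
have [t [q [y [w [m [W' [Hj Ety Hm]]]]]]] := sweep_jumps HA Hbal Hs Hacc.
have [[Hw Hperm _] Hw0 Ht _ _ Hacc'] := Hj.
have Hwc : Lc \notin w.
  have := reads_c_free (reads_cat HA Hw) Hacc' (cat_neq0l _ Ht).
  by apply: contra; rewrite mem_cat => ->; rewrite orbT.
have HqU : q \notin U.
  apply/negP=> /HU [M HM HMc].
  apply: jump_point_no_loop HA Hj (reads_cat HM Hw) (cat_neq0r _ Hw0) _.
  by rewrite mem_cat negb_or HMc.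
exists q, (A ++ w), m, W'; split=> //; split.
- exact: reads_cat HA Hw.
- have Hp : perm_eq (A ++ nseq s La ++ rcons W Lc) ((A ++ w) ++ nseq m La ++ rcons W' Lc).
    by rewrite -Ety -catA perm_cat2l.
  by rewrite /balanced -!(permP Hp).
- by rewrite -Ety.
- move=> r; rewrite in_setU1 => /orP [/eqP ->|/HU [M HM HMc]].
    by exists [::]; first exact: reads_nil.
  by exists (M ++ w); [exact: reads_cat HM Hw | rewrite mem_cat negb_or HMc].
Qed.

Fixpoint block_bound n :=
  (lmax * #|Q| + lmax).+1 + (if n is n'.+1 then gain * (block_bound n' + lmax) else 0).

Lemma block_bound_gt n : lmax * #|Q| + lmax < block_bound n.
Proof. by case: n => [|n] /=; lia. Qed.

Lemma sweep_start_bound n U p A s W : sweep_start U p A s W -> block_bound n <= s ->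
  #|Q| <= #|U| + n -> False.
Proof.
elim: n U p A s W => [|n IH] U p A s W Hst Hs HU;
  have [q [A' [m [W' [HqU Hst' Hm]]]]] := sweep_start_next (leq_trans (block_bound_gt _) Hs) Hst.
  by have := max_card (mem (q |: U)); rewrite cardsU1 HqU; lia.
apply: IH Hst' _ _; last by rewrite cardsU1 HqU; lia.
have : gain * (block_bound n + lmax) < gain * (m + lmax) by move: Hs Hm => /=; lia.
by rewrite ltn_pmul2l ?gain_gt0; lia.
Qed.

Lemma no_automaton : False.
Proof.
pose n := block_bound #|Q|.
apply: (@sweep_start_bound #|Q| set0 q0 [::] n (nseq n Lb) _ (leqnn n)); last by rewrite cards0.
split.
- exact: reads_nil.
- by rewrite /balanced /= !count_cat -cats1 !count_cat !count_nseq /=; lia.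
- by apply/accR; exists (nseq n La ++ nseq n Lb); split; [exact: dyck_anbn | rewrite rcons_cat].
- by move=> r; rewrite in_set0.
Qed.

End NoAutomaton.

Theorem lemma6 :
  ~ exists (Q : finType) (q0 : Q) (F : {set Q}) (R : seq (Q * seq abc * Q)),
      wf_rules R /\ (forall w : seq abc, accepts R q0 F w <-> Dc w).
Proof. by case=> Q [q0 [F [R [wfR accR]]]]; exact: no_automaton wfR accR. Qed.
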